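(* Every formula $\varphi\in\mathcal{L}_\mu$ is equivalent, over the class of path-finite $\mathsf{wK4}$ models (in particular over all finite $\mathsf{wK4}$ models), to a bisimulation-invariant first-order formula $\theta(y)$ in the signature consisting of the binary relation $\sqsubset$ and one unary predicate for each propositional constant; i.e. for every such model $M$ and $w\in M$, $w\in\|\varphi\|_M$ iff $M\models\theta[w]$.
   Context: A Kripke model is $M=\langle M,\sqsubset,\|\cdot\|\rangle$; $\sqsubseteq$ is the reflexive closure of $\sqsubset$. $\mathsf{wK4}$: for all $a\neq c$, $a\sqsubset b\sqsubset c$ implies $a\sqsubset c$. Write $u\prec v$ iff $u\sqsubset v$ and not $v\sqsubset u$. The model is path-finite if $\prec$ is conversely well-founded (there is no infinite sequence $u_0\prec u_1\prec u_2\prec\cdots$). $\mathcal{L}_\mu$ (negation normal form): $\varphi::=\top\mid x\mid p\mid\neg p\mid\varphi\wedge\varphi\mid\varphi\vee\varphi\mid\Diamond\varphi\mid\Box\varphi\mid\nu x.\varphi\mid\mu x.\varphi$, with standard Kripke semantics ($\Diamond$/$\Box$ over $\sqsubset$-successors, $\mu,\nu$ least/greatest fixed points). A bisimulation between models $M,N$ (for a set $P$ of constants) is a relation $\iota\subseteq M\times N$ such that related points agree on all $p\in P$, and the forth and back conditions hold for $\sqsubset$. A first-order formula $\theta(y)$ is bisimulation invariant if whenever $(u,v)$ lies in a bisimulation, $M\models\theta[u]$ iff $N\models\theta[v]$. *)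

From Stdlib Require Import Arith List.

Record model : Type := Model {
  carrier :> Type;
  rel : carrier -> carrier -> Prop;
  val : nat -> carrier -> Prop
}.

Definition wK4 (M : model) : Prop :=
  forall a b c : M, a <> c -> rel M a b -> rel M b c -> rel M a c.

Definition sprec (M : model) (u v : M) : Prop := rel M u v /\ ~ rel M v u.

Definition path_finite (M : model) : Prop :=
  ~ exists u : nat -> M, forall n, sprec M (u n) (u (S n)).

Inductive muform : Type :=
| MTop : muform
| MVar : nat -> muform
| MProp : nat -> muform
| MNProp : nat -> muform
| MAnd : muform -> muform -> muform
| MOr : muform -> muform -> muform
| MDia : muform -> muform
| MBox : muform -> muform
| MNu : nat -> muform -> muform
| MMu : nat -> muform -> muform.

Definition upd_set {W : Type} (rho : nat -> W -> Prop) (x : nat) (S : W -> Prop)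
  : nat -> W -> Prop := fun y => if Nat.eqb y x then S else rho y.

(** Semantics; μ and ν are the Knaster–Tarski least / greatest fixed points
    (intersection of prefixed points / union of postfixed points). *)
Fixpoint mu_sem (M : model) (rho : nat -> M -> Prop) (phi : muform) : M -> Prop :=
  match phi with
  | MTop => fun _ => True
  | MVar x => rho x
  | MProp p => val M p
  | MNProp p => fun w => ~ val M p w
  | MAnd a b => fun w => mu_sem M rho a w /\ mu_sem M rho b w
  | MOr a b => fun w => mu_sem M rho a w \/ mu_sem M rho b w
  | MDia a => fun w => exists v, rel M w v /\ mu_sem M rho a v
  | MBox a => fun w => forall v, rel M w v -> mu_sem M rho a v
  | MNu x a => fun w => exists S : M -> Prop,
        (forall u, S u -> mu_sem M (upd_set rho x S) a u) /\ S w
  | MMu x a => fun w => forall S : M -> Prop,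
        (forall u, mu_sem M (upd_set rho x S) a u -> S u) -> S w
  end.

Fixpoint mu_free (x : nat) (phi : muform) : Prop :=
  match phi with
  | MTop | MProp _ | MNProp _ => False
  | MVar y => y = x
  | MAnd a b | MOr a b => mu_free x a \/ mu_free x b
  | MDia a | MBox a => mu_free x a
  | MNu y a | MMu y a => y <> x /\ mu_free x a
  end.

Definition mu_closed (phi : muform) : Prop := forall x, ~ mu_free x phi.

(** truth set ‖φ‖_M of a closed formula (the assignment is irrelevant) *)
Definition truth_set (M : model) (phi : muform) : M -> Prop :=
  mu_sem M (fun _ _ => False) phi.

Inductive foform : Type :=
| FTrue : foform
| FRel : nat -> nat -> foform
| FEq : nat -> nat -> foform
| FPred : nat -> nat -> foform
| FNot : foform -> foform
| FAnd : foform -> foform -> foform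
| FOr : foform -> foform -> foform
| FImp : foform -> foform -> foform
| FEx : nat -> foform -> foform
| FAll : nat -> foform -> foform.

Definition upd_env {W : Type} (e : nat -> W) (i : nat) (w : W) : nat -> W :=
  fun j => if Nat.eqb j i then w else e j.

Fixpoint fo_sat (M : model) (e : nat -> M) (f : foform) : Prop :=
  match f with
  | FTrue => True
  | FRel i j => rel M (e i) (e j)
  | FEq i j => e i = e j
  | FPred p i => val M p (e i)
  | FNot a => ~ fo_sat M e a
  | FAnd a b => fo_sat M e a /\ fo_sat M e b
  | FOr a b => fo_sat M e a \/ fo_sat M e b
  | FImp a b => fo_sat M e a -> fo_sat M e b
  | FEx i a => exists w : M, fo_sat M (upd_env e i w) a
  | FAll i a => forall w : M, fo_sat M (upd_env e i w) a
  end.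

Fixpoint fo_free (i : nat) (f : foform) : Prop :=
  match f with
  | FTrue => False
  | FRel j k | FEq j k => j = i \/ k = i
  | FPred _ j => j = i
  | FNot a => fo_free i a
  | FAnd a b | FOr a b | FImp a b => fo_free i a \/ fo_free i b
  | FEx j a | FAll j a => j <> i /\ fo_free i a
  end.

Definition fo_in_one_var (y : nat) (f : foform) : Prop :=
  forall i, fo_free i f -> i = y.

Definition fo_holds_at (M : model) (f : foform) (y : nat) (w : M) : Prop :=
  fo_sat M (fun _ => w) f.

Definition bisimulation (M N : model) (Z : M -> N -> Prop) : Prop :=
  (forall u v, Z u v -> forall p, val M p u <-> val N p v) /\
  (forall u v, Z u v -> forall u', rel M u u' -> exists v', rel N v v' /\ Z u' v') /\
  (forall u v, Z u v -> forall v', rel N v v' -> exists u', rel M u u' /\ Z u' v').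

Definition bisim_invariant_on (C : model -> Prop) (f : foform) (y : nat) : Prop :=
  forall (M N : model) (Z : M -> N -> Prop), C M -> C N -> bisimulation M N Z ->
    forall u v, Z u v -> (fo_holds_at M f y u <-> fo_holds_at N f y v).

Definition pf_wK4 (M : model) : Prop := path_finite M /\ wK4 M.

From Stdlib Require Import List ListDec Arith Lia Classical ClassicalEpsilon.
Import ListNotations.

(* In a wK4 model the points seeing [w] and seen by [w] form the cluster of [w], and
   every other successor of [w] is a strict successor, seen from the whole cluster.
   Hence the truth at [w] of every subformula of [phi] (the type of [w]) is determined by
   finite data: the class of [w] (reflexivity and the relevant constants), whether each
   class occurs 0, 1 or at least 2 times in the cluster, and the set of types realised by
   the strict successors of [w]; this follows from a bisimulation between clusters
   relative to the strict successors.  The successor types of a strict successor of [w]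
   form a subset of those of [w], so "the strict successors realise exactly the types
   [Th]" is first-order definable by recursion on [Th] along strict inclusion, the
   non-strict case being expressed negatively through the strictly smaller candidates.
   Path-finiteness is what makes this recursive definition sound, by induction along
   the strict successor relation. *)

Definition up_closed (M : model) (U : M -> Prop) : Prop :=
  forall u v, U u -> rel M u v -> U v.

Lemma upd_set_le_on {W : Type} (U : W -> Prop) (r r' : nat -> W -> Prop) x (S S' : W -> Prop) :
  (forall y v, U v -> r y v -> r' y v) -> (forall v, U v -> S v -> S' v) ->
  forall y v, U v -> upd_set r x S y v -> upd_set r' x S' y v.
Proof. intros Hr HS y v. unfold upd_set. destruct (Nat.eqb y x); auto. Qed.

Lemma upd_set_rel {W1 W2 : Type} (R : W1 -> W2 -> Prop) r1 r2 x (S1 : W1 -> Prop) S2 :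
  (forall y a b, R a b -> r1 y a -> r2 y b) -> (forall a b, R a b -> S1 a -> S2 b) ->
  forall y a b, R a b -> upd_set r1 x S1 y a -> upd_set r2 x S2 y b.
Proof. intros Hr HS y a b. unfold upd_set. destruct (Nat.eqb y x); eauto. Qed.

Lemma mu_sem_mono_on (M : model) (U : M -> Prop) : up_closed M U ->
  forall psi (r r' : nat -> M -> Prop), (forall x v, U v -> r x v -> r' x v) ->
  forall v, U v -> mu_sem M r psi v -> mu_sem M r' psi v.
Proof.
  intros HU psi. induction psi; intros r r' Hr v Uv H; simpl in *; eauto.
  - destruct H; split; eauto.
  - destruct H; [left | right]; eauto.
  - destruct H as [u [Hvu Hu]]. exists u; eauto.
  - destruct H as [S [HS Sv]]. exists (fun u => S u /\ U u). split; [|auto].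
    intros u [Su Uu]. apply (IHpsi (upd_set r n S)); auto.
    apply upd_set_le_on; auto.
  - intros S HS. apply (H (fun u => U u -> S u)); auto.
    intros u Hu Uu. apply HS. revert Hu. apply IHpsi; auto.
    apply upd_set_le_on; auto.
Qed.

Lemma mu_sem_mono (M : model) psi (r r' : nat -> M -> Prop) :
  (forall x v, r x v -> r' x v) -> forall v, mu_sem M r psi v -> mu_sem M r' psi v.
Proof. intros Hr v. apply (mu_sem_mono_on M (fun _ => True)); auto. now intros ? ? ? ?. Qed.

Lemma nu_unfold (M : model) r x a v : mu_sem M r (MNu x a) v ->
  mu_sem M (upd_set r x (mu_sem M r (MNu x a))) a v.
Proof.
  intros Hnu. destruct Hnu as [S [HS Sv]]. apply mu_sem_mono with (upd_set r x S); [|auto].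
  intros y w. apply (upd_set_le_on (fun _ : M => True)); auto. intros u _ Su. exists S; auto.
Qed.

Lemma mu_fold (M : model) r x a v :
  mu_sem M (upd_set r x (mu_sem M r (MMu x a))) a v -> mu_sem M r (MMu x a) v.
Proof.
  intros H S HS. apply HS. revert H. apply mu_sem_mono.
  intros y w. apply (upd_set_le_on (fun _ : M => True)); auto. intros u _ Hu. now apply Hu.
Qed.

Definition matches (bits : list bool) (L : list Prop) : Prop :=
  Forall2 (fun (bit : bool) (Q : Prop) => bit = true <-> Q) bits L.

Lemma matches_exists (L : list Prop) : exists bits, matches bits L.
Proof.
  induction L as [|Q L [bits H]]; [exists []; constructor|].
  destruct (classic Q).
  - exists (true :: bits). constructor; [tauto | auto].
  - exists (false :: bits). constructor; [split; [discriminate | tauto] | auto].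
Qed.

Lemma matches_unique L bits bits' : matches bits L -> matches bits' L -> bits = bits'.
Proof.
  intros H. revert bits'.
  induction H as [|b Q bs L Hb _ IH]; intros bits' H';
    inversion H' as [|b' Q' bs' L' Hb' Hbs']; subst; [reflexivity|].
  f_equal; [|auto]. destruct b, b'; try reflexivity; exfalso.
  - assert (false = true) by tauto. discriminate.
  - assert (false = true) by tauto. discriminate.
Qed.

Lemma matches_length bits L : matches bits L -> length bits = length L.
Proof. apply Forall2_length. Qed.

Lemma matches_Forall2_iff bits L1 L2 : matches bits L1 -> matches bits L2 -> Forall2 iff L1 L2.
Proof.
  intros H1. revert L2.
  induction H1 as [|b Q1 bs L1 Hb _ IH]; intros L2 H2; inversion H2; subst; constructor.
  - tauto.
  - now apply IH.
Qed.

Lemma Forall2_iff_matches bits L1 L2 : Forall2 iff L1 L2 -> matches bits L1 -> matches bits L2.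
Proof.
  intros H. revert bits.
  induction H as [|Q1 Q2 L1 L2 HQ _ IH]; intros bits H1; inversion H1; subst; constructor.
  - tauto.
  - now apply IH.
Qed.

Lemma Forall2_iff_sym L1 L2 : Forall2 iff L1 L2 -> Forall2 iff L2 L1.
Proof. induction 1; constructor; auto. now symmetry. Qed.

Lemma Forall2_iff_map {X : Type} (f g : X -> Prop) l :
  Forall2 iff (map f l) (map g l) -> forall x, In x l -> (f x <-> g x).
Proof.
  induction l as [|a l IH]; simpl; intros H x Hx; [contradiction|].
  inversion H; subst. destruct Hx as [<- | Hx]; auto.
Qed.

Lemma Forall2_app_iff {A B : Type} (R : A -> B -> Prop) l1 l2 l1' l2' :
  length l1 = length l1' ->
  Forall2 R (l1 ++ l2) (l1' ++ l2') <-> Forall2 R l1 l1' /\ Forall2 R l2 l2'.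
Proof.
  revert l1'. induction l1 as [|a l1 IH]; intros [|a' l1'] Hl; simpl in *; try discriminate.
  - split; [split; [constructor | auto] | tauto].
  - rewrite !Forall2_cons_iff, IH by lia. tauto.
Qed.

Fixpoint all_bitvecs (n : nat) : list (list bool) :=
  match n with
  | 0 => [[]]
  | S n => map (cons true) (all_bitvecs n) ++ map (cons false) (all_bitvecs n)
  end.

Lemma in_all_bitvecs n bits : In bits (all_bitvecs n) <-> length bits = n.
Proof.
  revert bits. induction n as [|n IH]; intros bits; simpl.
  - destruct bits; simpl; intuition discriminate.
  - rewrite in_app_iff, !in_map_iff. split.
    + intros [[b [<- Hb]] | [b [<- Hb]]]; simpl; f_equal; now apply IH.
    + destruct bits as [|[] bits]; simpl; intros Hl; try discriminate;
        [left | right]; exists bits; rewrite IH; auto.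
Qed.

Lemma NoDup_all_bitvecs n : NoDup (all_bitvecs n).
Proof.
  induction n as [|n IH]; simpl; [repeat constructor; auto|].
  apply NoDup_app.
  - apply NoDup_map_NoDup_ForallPairs; auto. now intros ? ? _ _ [= ->].
  - apply NoDup_map_NoDup_ForallPairs; auto. now intros ? ? _ _ [= ->].
  - intros bits H1 H2. apply in_map_iff in H1 as [? [<- _]].
    apply in_map_iff in H2 as [? [? _]]. discriminate.
Qed.

Lemma strict_incl_length {A : Type} (l l' : list A) :
  NoDup l -> incl l l' -> ~ incl l' l -> length l < length l'.
Proof.
  intros Hl Hincl Hnot. destruct (Nat.lt_ge_cases (length l) (length l')) as [|Hle]; auto.
  exfalso. apply Hnot. now apply NoDup_length_incl.
Qed.

Fixpoint sublists {A : Type} (l : list A) : list (list A) :=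
  match l with
  | [] => [[]]
  | a :: l => map (cons a) (sublists l) ++ sublists l
  end.

Lemma sublists_incl {A : Type} (l s : list A) : In s (sublists l) -> incl s l.
Proof.
  revert s. induction l as [|a l IH]; simpl; intros s H.
  - destruct H as [<- | []]. apply incl_nil_l.
  - apply in_app_or in H as [H | H].
    + apply in_map_iff in H as [t [<- Ht]]. apply incl_cons; [now left|].
      apply incl_tl; auto.
    + apply incl_tl; auto.
Qed.

Lemma sublists_NoDup {A : Type} (l s : list A) : NoDup l -> In s (sublists l) -> NoDup s.
Proof.
  revert s. induction l as [|a l IH]; simpl; intros s Hl H.
  - destruct H as [<- | []]. constructor.
  - inversion Hl as [|? ? Ha Hl']; subst. apply in_app_or in H as [H | H]; auto.
    apply in_map_iff in H as [t [<- Ht]]. constructor; auto.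
    intros Hat. apply Ha, (sublists_incl l t); auto.
Qed.

Lemma sublists_filter {A : Type} (Pr : A -> Prop) (l : list A) :
  exists s, In s (sublists l) /\ forall x, In x s <-> In x l /\ Pr x.
Proof.
  induction l as [|a l [s [Hs Hx]]]; simpl.
  - exists []. split; auto. simpl. tauto.
  - destruct (classic (Pr a)) as [Ha | Ha].
    + exists (a :: s). split; [apply in_or_app; left; now apply in_map|].
      intros x. simpl. rewrite Hx. intuition congruence.
    + exists s. split; [apply in_or_app; now right|].
      intros x. rewrite Hx. intuition congruence.
Qed.

Fixpoint props (phi : muform) : list nat :=
  match phi with
  | MProp p | MNProp p => [p]
  | MAnd a b | MOr a b => props a ++ props b
  | MDia a | MBox a | MNu _ a | MMu _ a => props a
  | MTop | MVar _ => []
  end.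

Fixpoint fsize (phi : muform) : nat :=
  S (match phi with
     | MAnd a b | MOr a b => fsize a + fsize b
     | MDia a | MBox a | MNu _ a | MMu _ a => fsize a
     | MTop | MVar _ | MProp _ | MNProp _ => 0
     end).

Fixpoint sub_truths (M : model) (r : nat -> M -> Prop) (psi : muform) (v : M) : list Prop :=
  mu_sem M r psi v ::
  match psi with
  | MAnd a b | MOr a b => sub_truths M r a v ++ sub_truths M r b v
  | MDia a | MBox a => sub_truths M r a v
  | MNu x a | MMu x a => sub_truths M (upd_set r x (mu_sem M r psi)) a v
  | MTop | MVar _ | MProp _ | MNProp _ => []
  end.

Lemma length_sub_truths M r psi v : length (sub_truths M r psi v) = fsize psi.
Proof.
  revert r. induction psi; intros r; simpl; rewrite ?length_app; auto.
Qed.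

Fixpoint sub_agree (M1 M2 : model) (s1 : nat -> M1 -> Prop) (s2 : nat -> M2 -> Prop)
  (psi : muform) (v1 : M1) (v2 : M2) : Prop :=
  (mu_sem M1 s1 psi v1 <-> mu_sem M2 s2 psi v2) /\
  match psi with
  | MAnd a b | MOr a b => sub_agree M1 M2 s1 s2 a v1 v2 /\ sub_agree M1 M2 s1 s2 b v1 v2
  | MDia a | MBox a => sub_agree M1 M2 s1 s2 a v1 v2
  | MNu x a | MMu x a => sub_agree M1 M2 (upd_set s1 x (mu_sem M1 s1 psi))
                           (upd_set s2 x (mu_sem M2 s2 psi)) a v1 v2
  | MTop | MVar _ | MProp _ | MNProp _ => True
  end.

Lemma sub_agree_Forall2_iff M1 M2 s1 s2 psi v1 v2 :
  sub_agree M1 M2 s1 s2 psi v1 v2 <->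
  Forall2 iff (sub_truths M1 s1 psi v1) (sub_truths M2 s2 psi v2).
Proof.
  assert (Hnil : Forall2 iff [] [] <-> True) by (split; constructor).
  revert s1 s2. induction psi; intros s1 s2; simpl; rewrite Forall2_cons_iff;
    rewrite ?Hnil, ?Forall2_app_iff, ?IHpsi, ?IHpsi1, ?IHpsi2
      by (now rewrite !length_sub_truths); tauto.
Qed.

Lemma sub_agree_head M1 M2 s1 s2 psi v1 v2 : sub_agree M1 M2 s1 s2 psi v1 v2 ->
  (mu_sem M1 s1 psi v1 <-> mu_sem M2 s2 psi v2).
Proof. destruct psi; simpl; tauto. Qed.

Lemma sub_agree_sym M1 M2 s1 s2 psi v1 v2 :
  sub_agree M1 M2 s1 s2 psi v1 v2 -> sub_agree M2 M1 s2 s1 psi v2 v1.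
Proof. rewrite !sub_agree_Forall2_iff. apply Forall2_iff_sym. Qed.

(* A bisimulation up to the up-closed "outer" sets [A1], [A2], on which agreement of
   the two models has to be supplied separately. *)
Record relative_bisimulation (M1 M2 : model) (Z : M1 -> M2 -> Prop)
    (A1 : M1 -> Prop) (A2 : M2 -> Prop) (P : list nat) : Prop := {
  rb_val : forall c1 c2, Z c1 c2 -> forall p, In p P -> (val M1 p c1 <-> val M2 p c2);
  rb_forth : forall c1 c2 v1, Z c1 c2 -> rel M1 c1 v1 ->
    A1 v1 \/ exists v2, rel M2 c2 v2 /\ Z v1 v2;
  rb_back : forall c1 c2 v2, Z c1 c2 -> rel M2 c2 v2 ->
    A2 v2 \/ exists v1, rel M1 c1 v1 /\ Z v1 v2;
  rb_outer_succ1 : forall c1 c2 v1, Z c1 c2 -> A1 v1 -> rel M1 c1 v1;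
  rb_outer_succ2 : forall c1 c2 v2, Z c1 c2 -> A2 v2 -> rel M2 c2 v2;
  rb_up_closed1 : up_closed M1 A1;
  rb_up_closed2 : up_closed M2 A2
}.

Lemma relative_bisimulation_sym M1 M2 Z A1 A2 P :
  relative_bisimulation M1 M2 Z A1 A2 P ->
  relative_bisimulation M2 M1 (fun a b => Z b a) A2 A1 P.
Proof.
  intros [Hval Hforth Hback Hout1 Hout2 Hup1 Hup2]; split; eauto.
  intros c2 c1 Hz p Hp. symmetry. eauto.
Qed.

Lemma bisimulation_relative M N Z P : bisimulation M N Z ->
  relative_bisimulation M N Z (fun _ => False) (fun _ => False) P.
Proof.
  intros (Hval & Hforth & Hback); split; try (intros; contradiction); auto.
  - intros c1 c2 v1 Hz Hr. right. eauto.
  - intros c1 c2 v2 Hz Hr. right. destruct (Hback _ _ Hz _ Hr) as [v1 [? ?]]. eauto.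
  - now intros ? ? [].
  - now intros ? ? [].
Qed.

Definition bitotal_on {W1 W2 : Type} (A1 : W1 -> Prop) (A2 : W2 -> Prop)
  (R : W1 -> W2 -> Prop) : Prop :=
  (forall v1, A1 v1 -> exists v2, A2 v2 /\ R v1 v2) /\
  (forall v2, A2 v2 -> exists v1, A1 v1 /\ R v1 v2).

Lemma bitotal_on_impl {W1 W2 : Type} A1 A2 (R R' : W1 -> W2 -> Prop) :
  (forall a b, R a b -> R' a b) -> bitotal_on A1 A2 R -> bitotal_on A1 A2 R'.
Proof.
  intros H [H1 H2]; split; intros v Hv;
    [destruct (H1 v Hv) as [w [? ?]] | destruct (H2 v Hv) as [w [? ?]]]; eauto.
Qed.

Lemma bitotal_on_sym {W1 W2 : Type} A1 A2 (R : W1 -> W2 -> Prop) :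
  bitotal_on A1 A2 R -> bitotal_on A2 A1 (fun b a => R a b).
Proof. intros [H1 H2]; split; auto. Qed.

Section Transfer.

Variables (M1 M2 : model) (Z : M1 -> M2 -> Prop) (A1 : M1 -> Prop) (A2 : M2 -> Prop)
  (P : list nat).
Hypothesis HZ : relative_bisimulation M1 M2 Z A1 A2 P.

Let HU1 : up_closed M1 A1 := rb_up_closed1 _ _ _ _ _ _ HZ.
Let HU2 : up_closed M2 A2 := rb_up_closed2 _ _ _ _ _ _ HZ.

(* [s1], [s2] are the assignments on the outer sets, where agreement is assumed;
   [r1], [r2] are approximations of them, needed to run the fixpoint inductions. *)
Definition transfers (psi : muform) : Prop :=
  forall s1 s2, bitotal_on A1 A2 (sub_agree M1 M2 s1 s2 psi) ->
  forall r1 r2, (forall x v, A1 v -> r1 x v -> s1 x v) ->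
  (forall x v, A2 v -> s2 x v -> r2 x v) ->
  (forall x c1 c2, Z c1 c2 -> r1 x c1 -> r2 x c2) ->
  forall c1 c2, Z c1 c2 -> mu_sem M1 r1 psi c1 -> mu_sem M2 r2 psi c2.

Lemma transfer_outer s1 s2 r1 r2 psi v1 v2 :
  (forall x v, A1 v -> r1 x v -> s1 x v) -> (forall x v, A2 v -> s2 x v -> r2 x v) ->
  A1 v1 -> A2 v2 -> sub_agree M1 M2 s1 s2 psi v1 v2 ->
  mu_sem M1 r1 psi v1 -> mu_sem M2 r2 psi v2.
Proof.
  intros Hr1 Hr2 Hv1 Hv2 Hagree H.
  apply (mu_sem_mono_on M2 A2 HU2 psi s2); auto.
  apply (sub_agree_head _ _ _ _ _ _ _ Hagree).
  exact (mu_sem_mono_on M1 A1 HU1 psi r1 s1 Hr1 v1 Hv1 H).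
Qed.

Lemma transfers_and a b : transfers a -> transfers b -> transfers (MAnd a b).
Proof.
  intros Ha Hb s1 s2 HT r1 r2 Hr1 Hr2 Hz c1 c2 Hc [H1 H2]. split.
  - eapply Ha; eauto. eapply bitotal_on_impl; [|exact HT]. now intros ? ? [_ [? _]].
  - eapply Hb; eauto. eapply bitotal_on_impl; [|exact HT]. now intros ? ? [_ [_ ?]].
Qed.

Lemma transfers_or a b : transfers a -> transfers b -> transfers (MOr a b).
Proof.
  intros Ha Hb s1 s2 HT r1 r2 Hr1 Hr2 Hz c1 c2 Hc [H | H]; [left | right].
  - eapply Ha; eauto. eapply bitotal_on_impl; [|exact HT]. now intros ? ? [_ [? _]].
  - eapply Hb; eauto. eapply bitotal_on_impl; [|exact HT]. now intros ? ? [_ [_ ?]].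
Qed.

Lemma transfers_dia a : transfers a -> transfers (MDia a).
Proof.
  intros Ha s1 s2 HT r1 r2 Hr1 Hr2 Hz c1 c2 Hc [v1 [Hrel H]].
  destruct (rb_forth _ _ _ _ _ _ HZ _ _ _ Hc Hrel) as [Hout | [v2 [Hrel2 Hv]]].
  - destruct (proj1 HT v1 Hout) as [v2 [Hout2 [_ Hagree]]].
    exists v2. split; [eapply rb_outer_succ2; eauto|].
    eapply transfer_outer; eauto.
  - exists v2. split; auto. eapply Ha; eauto.
    eapply bitotal_on_impl; [|exact HT]. now intros ? ? [_ ?].
Qed.

Lemma transfers_box a : transfers a -> transfers (MBox a).
Proof.
  intros Ha s1 s2 HT r1 r2 Hr1 Hr2 Hz c1 c2 Hc H v2 Hrel.
  destruct (rb_back _ _ _ _ _ _ HZ _ _ _ Hc Hrel) as [Hout | [v1 [Hrel1 Hv]]].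
  - destruct (proj2 HT v2 Hout) as [v1 [Hout1 [_ Hagree]]].
    eapply transfer_outer; eauto. apply H. eapply rb_outer_succ1; eauto.
  - eapply Ha; eauto. eapply bitotal_on_impl; [|exact HT]. now intros ? ? [_ ?].
Qed.

(* The image of the greatest fixpoint, together with the outer part of the target
   fixpoint, is a postfixed point in [M2]. *)
Lemma transfers_nu x a : transfers a -> transfers (MNu x a).
Proof.
  intros Ha s1 s2 HT r1 r2 Hr1 Hr2 Hz c1 c2 Hc H.
  set (G1 := mu_sem M1 r1 (MNu x a)).
  set (S2 := fun u2 => (exists u1, Z u1 u2 /\ G1 u1) \/ (A2 u2 /\ mu_sem M2 s2 (MNu x a) u2)).
  assert (HS2 : forall y v, A2 v -> upd_set s2 x (mu_sem M2 s2 (MNu x a)) y v ->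
                            upd_set r2 x S2 y v).
  { apply upd_set_le_on; auto. intros v Hv Hnu. right. auto. }
  exists S2. split; [|left; eauto].
  intros u2 [[u1 [Hu Hg]] | [Hout Hnu]].
  - apply nu_unfold in Hg.
    refine (Ha (upd_set s1 x (mu_sem M1 s1 (MNu x a))) (upd_set s2 x (mu_sem M2 s2 (MNu x a)))
              _ (upd_set r1 x G1) (upd_set r2 x S2) _ HS2 _ u1 u2 Hu Hg).
    + eapply bitotal_on_impl; [|exact HT]. now intros ? ? [_ ?].
    + apply upd_set_le_on; auto. intros v Hv Hg'.
      exact (mu_sem_mono_on M1 A1 HU1 _ r1 s1 Hr1 v Hv Hg').
    + apply (upd_set_rel Z); auto. intros b1 b2 Hb Hg'. left. eauto.
  - apply nu_unfold in Hnu.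
    exact (mu_sem_mono_on M2 A2 HU2 _ _ _ HS2 u2 Hout Hnu).
Qed.

(* Dually, the points of [M1] all of whose partners lie in the target least fixpoint
   (and which lie in the source fixpoint when outer) form a prefixed point in [M1]. *)
Lemma transfers_mu x a : transfers a -> transfers (MMu x a).
Proof.
  intros Ha s1 s2 HT r1 r2 Hr1 Hr2 Hz c1 c2 Hc H S2 HS2.
  set (G2 := mu_sem M2 r2 (MMu x a)).
  enough (HG2 : G2 c2) by (apply HG2; exact HS2).
  set (S1 := fun u1 => (forall u2, Z u1 u2 -> G2 u2) /\
                       (A1 u1 -> mu_sem M1 s1 (MMu x a) u1)).
  assert (HS1 : forall y v, A1 v -> upd_set r1 x S1 y v ->
                            upd_set s1 x (mu_sem M1 s1 (MMu x a)) y v).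
  { apply upd_set_le_on; auto. intros v Hv [_ Hmu]. auto. }
  enough (Hc1 : S1 c1) by (apply Hc1, Hc).
  apply H. intros u1 Hu1. split.
  - intros u2 Hu. apply mu_fold.
    refine (Ha (upd_set s1 x (mu_sem M1 s1 (MMu x a))) (upd_set s2 x (mu_sem M2 s2 (MMu x a)))
              _ (upd_set r1 x S1) (upd_set r2 x G2) HS1 _ _ u1 u2 Hu Hu1).
    + eapply bitotal_on_impl; [|exact HT]. now intros ? ? [_ ?].
    + apply upd_set_le_on; auto. intros v Hv Hmu.
      exact (mu_sem_mono_on M2 A2 HU2 _ s2 r2 Hr2 v Hv Hmu).
    + apply (upd_set_rel Z); auto. intros b1 b2 Hb [HG _]. auto.
  - intros Hout. apply mu_fold.
    exact (mu_sem_mono_on M1 A1 HU1 _ _ _ HS1 u1 Hout Hu1).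
Qed.

Lemma transfers_all psi : incl (props psi) P -> transfers psi.
Proof.
  induction psi; simpl; intros HP.
  - intros s1 s2 _ r1 r2 _ _ _ c1 c2 _ _. exact I.
  - intros s1 s2 _ r1 r2 _ _ Hz c1 c2 Hc. exact (Hz n c1 c2 Hc).
  - intros s1 s2 _ r1 r2 _ _ _ c1 c2 Hc. apply (rb_val _ _ _ _ _ _ HZ _ _ Hc), HP. now left.
  - intros s1 s2 _ r1 r2 _ _ _ c1 c2 Hc H H'. apply H.
    apply (rb_val _ _ _ _ _ _ HZ _ _ Hc); auto. apply HP. now left.
  - apply incl_app_inv in HP as [? ?]. apply transfers_and; auto.
  - apply incl_app_inv in HP as [? ?]. apply transfers_or; auto.
  - apply transfers_dia; auto.
  - apply transfers_box; auto.
  - apply transfers_nu; auto.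
  - apply transfers_mu; auto.
Qed.

End Transfer.

Lemma transfer_iff M1 M2 Z A1 A2 P psi s1 s2 :
  relative_bisimulation M1 M2 Z A1 A2 P -> incl (props psi) P ->
  bitotal_on A1 A2 (sub_agree M1 M2 s1 s2 psi) ->
  (forall x c1 c2, Z c1 c2 -> (s1 x c1 <-> s2 x c2)) ->
  forall c1 c2, Z c1 c2 -> (mu_sem M1 s1 psi c1 <-> mu_sem M2 s2 psi c2).
Proof.
  intros HZ HP HT Hs c1 c2 Hc. split.
  - apply (transfers_all M1 M2 Z A1 A2 P HZ psi HP s1 s2 HT); auto.
    intros x a b Hab. now apply Hs.
  - apply (transfers_all M2 M1 (fun a b => Z b a) A2 A1 P
             (relative_bisimulation_sym _ _ _ _ _ _ HZ) psi HP s2 s1); auto.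
    + eapply bitotal_on_impl; [|exact (bitotal_on_sym _ _ _ HT)].
      intros ? ?. apply sub_agree_sym.
    + intros x a b Hab. now apply Hs.
Qed.

Lemma transfer_sub_agree M1 M2 Z A1 A2 P psi : relative_bisimulation M1 M2 Z A1 A2 P ->
  incl (props psi) P -> forall s1 s2, bitotal_on A1 A2 (sub_agree M1 M2 s1 s2 psi) ->
  (forall x c1 c2, Z c1 c2 -> (s1 x c1 <-> s2 x c2)) ->
  forall c1 c2, Z c1 c2 -> sub_agree M1 M2 s1 s2 psi c1 c2.
Proof.
  intros HZ. induction psi; intros HP s1 s2 HT Hs c1 c2 Hc; cbn [sub_agree];
    (split; [eapply transfer_iff; eauto|]); cbn [props] in HP; auto.
  1, 2: apply incl_app_inv in HP as [HPa HPb];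
    split; [apply IHpsi1 | apply IHpsi2]; auto;
    eapply bitotal_on_impl; try exact HT; now intros ? ? [_ [? ?]].
  all: apply IHpsi; auto; try (eapply bitotal_on_impl; try exact HT; now intros ? ? [_ ?]).
  all: intros y a b Hab; unfold upd_set; destruct (Nat.eqb y n); auto;
    eapply transfer_iff; eauto.
Qed.

Lemma truth_set_bisim_invariant phi M N Z : bisimulation M N Z ->
  forall u v, Z u v -> (truth_set M phi u <-> truth_set N phi v).
Proof.
  intros HB u v Huv. unfold truth_set.
  apply (transfer_iff M N Z _ _ (props phi) phi _ _ (bisimulation_relative M N Z _ HB));
    auto using incl_refl.
  - split; intros ? [].
  - intros; tauto.
Qed.

Definition in_cluster (M : model) (w v : M) : Prop := w = v \/ (rel M w v /\ rel M v w).

Section WeakTransitivity.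

Variables (M : model) (HW : wK4 M).

Lemma sprec_up_closed (z : M) : up_closed M (sprec M z).
Proof.
  intros u v [Hzu Huz] Huv. split.
  - apply (HW z u v); auto. intros ->. auto.
  - intros Hvz. apply Huz, (HW u v z); auto. intros ->. auto.
Qed.

Lemma sprec_trans (w z v : M) : sprec M w z -> sprec M z v -> sprec M w v.
Proof. intros Hwz [Hzv _]. exact (sprec_up_closed w z v Hwz Hzv). Qed.

Lemma in_cluster_succ (z c v : M) : in_cluster M z c -> rel M c v ->
  in_cluster M z v \/ sprec M z v.
Proof.
  intros Hc Hcv.
  assert (Hzv : z = v \/ rel M z v).
  { destruct Hc as [<- | [Hzc Hcz]]; auto.
    destruct (classic (z = v)); auto. right. eapply HW; eauto. }
  destruct Hzv as [<- | Hzv]; [left; now left|].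
  destruct (classic (rel M v z)); [left; now right | right; split; auto].
Qed.

Lemma in_cluster_rel (z a b : M) : in_cluster M z a -> in_cluster M z b -> a <> b -> rel M a b.
Proof.
  intros [<- | [Hza Haz]] [<- | [Hzb Hbz]] Hab; try congruence; auto. eapply HW; eauto.
Qed.

Lemma in_cluster_rel_sprec (z c v : M) : in_cluster M z c -> sprec M z v -> rel M c v.
Proof.
  intros [<- | [Hzc Hcz]] [Hzv Hvz]; auto. apply (HW c z v); auto. intros ->. auto.
Qed.

End WeakTransitivity.

Lemma path_finite_ind (M : model) : path_finite M -> forall Q : M -> Prop,
  (forall z, (forall z', sprec M z z' -> Q z') -> Q z) -> forall z, Q z.
Proof.
  intros Hpf Q Hstep z0. apply NNPP. intros Hz0.
  assert (Hbad : forall x : {z | ~ Q z}, exists y : {z | ~ Q z},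
                   sprec M (proj1_sig x) (proj1_sig y)).
  { intros [x Hx]. apply NNPP. intros Hn. apply Hx, Hstep. intros z' Hz'.
    apply NNPP. intros Hq. apply Hn. now exists (exist _ z' Hq). }
  apply choice in Hbad as [f Hf].
  apply Hpf. exists (fun n => proj1_sig (Nat.iter n f (exist _ z0 Hz0))).
  intros n. apply Hf.
Qed.

(* The class of a point records its reflexivity and the constants of [P] it satisfies;
   inside a cluster, bisimilarity only depends on how often (0, 1, or at least 2 times)
   each class occurs. *)
Definition class_props (P : list nat) (M : model) (v : M) : list Prop :=
  rel M v v :: map (fun p => val M p v) P.

Definition has_class P (M : model) k (v : M) : Prop := matches k (class_props P M v).

Definition classes (P : list nat) : list (list bool) := all_bitvecs (S (length P)).

Lemma has_class_in_classes P (M : model) k (v : M) : has_class P M k v -> In k (classes P).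
Proof.
  intros H. apply in_all_bitvecs. rewrite (matches_length _ _ H).
  simpl. now rewrite length_map.
Qed.

Definition occurs P (M : model) k (w : M) : Prop :=
  exists v, in_cluster M w v /\ has_class P M k v.

Definition occurs_twice P (M : model) k (w : M) : Prop :=
  exists v v', in_cluster M w v /\ in_cluster M w v' /\ v <> v' /\
    has_class P M k v /\ has_class P M k v'.

Definition local_props P (M : model) (w : M) : list Prop :=
  class_props P M w ++ map (fun k => occurs P M k w) (classes P) ++
  map (fun k => occurs_twice P M k w) (classes P).

Definition local_size (P : list nat) : nat := S (length P) + 2 * length (classes P).

Lemma length_local_props P (M : model) (w : M) : length (local_props P M w) = local_size P.
Proof. unfold local_props, local_size. simpl. rewrite !length_app, !length_map. lia. Qed.

Definition same_class P (M1 M2 : model) (c1 : M1) (c2 : M2) : Prop :=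
  exists k, has_class P M1 k c1 /\ has_class P M2 k c2.

Lemma same_class_props P (M1 M2 : model) (c1 : M1) (c2 : M2) : same_class P M1 M2 c1 c2 ->
  (rel M1 c1 c1 <-> rel M2 c2 c2) /\ forall p, In p P -> (val M1 p c1 <-> val M2 p c2).
Proof.
  intros [k [Hk1 Hk2]]. pose proof (matches_Forall2_iff _ _ _ Hk1 Hk2) as H.
  apply Forall2_cons_iff in H as [Hrefl Hval]. split; auto.
  exact (Forall2_iff_map (fun p => val M1 p c1) (fun p => val M2 p c2) P Hval).
Qed.

Definition same_occurrences P (M1 M2 : model) (z1 : M1) (z2 : M2) : Prop :=
  forall k, In k (classes P) ->
    (occurs P M1 k z1 <-> occurs P M2 k z2) /\
    (occurs_twice P M1 k z1 <-> occurs_twice P M2 k z2).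

Lemma same_local_props P (M1 M2 : model) (z1 : M1) (z2 : M2) d :
  matches d (local_props P M1 z1) -> matches d (local_props P M2 z2) ->
  same_class P M1 M2 z1 z2 /\ same_occurrences P M1 M2 z1 z2.
Proof.
  intros H1 H2. pose proof (matches_Forall2_iff _ _ _ H1 H2) as H.
  unfold local_props in H.
  rewrite !Forall2_app_iff in H by (simpl; rewrite !length_map; auto).
  destruct H as [Hcls [Hocc Hocc2]]. split.
  - destruct (matches_exists (class_props P M1 z1)) as [k Hk].
    exists k. split; auto. eapply Forall2_iff_matches; eauto.
  - intros k Hk. split; [apply (Forall2_iff_map _ _ _ Hocc) | apply (Forall2_iff_map _ _ _ Hocc2)];
      auto.
Qed.

Section ClusterBisimulation.

Variables (P : list nat) (M1 M2 : model) (HW1 : wK4 M1) (HW2 : wK4 M2) (z1 : M1) (z2 : M2).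
Hypothesis Hocc : same_occurrences P M1 M2 z1 z2.

Definition cluster_match (c1 : M1) (c2 : M2) : Prop :=
  in_cluster M1 z1 c1 /\ in_cluster M2 z2 c2 /\ same_class P M1 M2 c1 c2.

(* A successor [v1 <> c1] inside the cluster of [z1] is matched by a point of the
   cluster of [z2] different from [c2]: if [v1] has the class of [c1], that class occurs
   twice there, otherwise [v1]'s class occurs there and cannot be [c2]'s. *)
Lemma cluster_match_forth c1 c2 v1 : cluster_match c1 c2 -> rel M1 c1 v1 ->
  sprec M1 z1 v1 \/ exists v2, rel M2 c2 v2 /\ cluster_match v1 v2.
Proof.
  intros (Hc1 & Hc2 & k & Hk1 & Hk2) Hrel.
  destruct (in_cluster_succ M1 HW1 z1 c1 v1 Hc1 Hrel) as [Hv1 | Hv1]; [right | now left].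
  destruct (matches_exists (class_props P M1 v1)) as [k' Hk'].
  destruct (classic (v1 = c1)) as [-> | Hne].
  { exists c2. split; [|split; [|split; [|exists k]]]; auto.
    apply (same_class_props P M1 M2 c1 c2); auto. now exists k. }
  destruct (classic (k' = k)) as [-> | Hkk].
  - assert (Htwice : occurs_twice P M1 k z1) by (exists c1, v1; auto).
    apply (Hocc k (has_class_in_classes _ _ _ _ Hk1)) in Htwice
      as [v [v' (Hv & Hv' & Hvv' & Hkv & Hkv')]].
    destruct (classic (v = c2)) as [-> | Hvc].
    + exists v'. split; [apply (in_cluster_rel M2 HW2 z2); auto|].
      split; [|split; [|exists k]]; auto.
    + exists v. split; [apply (in_cluster_rel M2 HW2 z2); auto|].
      split; [|split; [|exists k]]; auto.
  - assert (Hocc1 : occurs P M1 k' z1) by (exists v1; auto).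
    apply (Hocc k' (has_class_in_classes _ _ _ _ Hk')) in Hocc1 as [v [Hv Hkv]].
    exists v. split; [|split; [|split; [|exists k']]]; auto.
    apply (in_cluster_rel M2 HW2 z2); auto. intros ->. apply Hkk.
    eapply matches_unique; eauto.
Qed.

End ClusterBisimulation.

Lemma cluster_relative_bisimulation P (M1 M2 : model) (z1 : M1) (z2 : M2) :
  wK4 M1 -> wK4 M2 -> same_occurrences P M1 M2 z1 z2 ->
  relative_bisimulation M1 M2 (cluster_match P M1 M2 z1 z2) (sprec M1 z1) (sprec M2 z2) P.
Proof.
  intros HW1 HW2 Hocc. split.
  - intros c1 c2 (_ & _ & Hcls). now apply same_class_props.
  - intros c1 c2 v1 Hc. now apply cluster_match_forth.
  - intros c1 c2 v2 (Hc1 & Hc2 & k & Hk1 & Hk2) Hrel.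
    assert (Hocc' : same_occurrences P M2 M1 z2 z1).
    { intros k' Hk'. split; symmetry; apply Hocc; auto. }
    assert (Hc : cluster_match P M2 M1 z2 z1 c2 c1) by (split; [|split; [|exists k]]; auto).
    destruct (cluster_match_forth P M2 M1 HW2 HW1 z2 z1 Hocc' c2 c1 v2 Hc Hrel)
      as [Hout | [v1 [Hv1 (Hin2 & Hin1 & k' & Hk2' & Hk1')]]]; [now left | right].
    exists v1. split; [|split; [|split; [|exists k']]]; auto.
  - intros c1 c2 v1 [Hc _] Hv. eapply in_cluster_rel_sprec; eauto.
  - intros c1 c2 v2 (_ & Hc & _) Hv. eapply in_cluster_rel_sprec; eauto.
  - now apply sprec_up_closed.
  - now apply sprec_up_closed.
Qed.

Definition empty_env (M : model) : nat -> M -> Prop := fun _ _ => False.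

Definition type_of (phi : muform) (M : model) (v : M) : list Prop :=
  sub_truths M (empty_env M) phi v.

Lemma type_of_in_all_bitvecs phi (M : model) (v : M) b :
  matches b (type_of phi M v) -> In b (all_bitvecs (fsize phi)).
Proof.
  intros H. apply in_all_bitvecs. rewrite (matches_length _ _ H). apply length_sub_truths.
Qed.

Lemma matches_type_of_head phi (M : model) (w : M) b : matches b (type_of phi M w) ->
  (hd false b = true <-> truth_set M phi w).
Proof.
  intros H. unfold type_of in H. destruct phi; simpl in H; inversion H; subst; simpl; auto.
Qed.

Definition succ_types_within phi (M : model) (Th : list (list bool)) (z : M) : Prop :=
  forall v, sprec M z v -> exists b, In b Th /\ matches b (type_of phi M v).

Definition succ_types phi (M : model) (Th : list (list bool)) (z : M) : Prop :=
  succ_types_within phi M Th z /\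
  forall b, In b Th -> exists v, sprec M z v /\ matches b (type_of phi M v).

Lemma succ_types_incl phi (M : model) Th Th' (z : M) :
  succ_types phi M Th z -> succ_types_within phi M Th' z -> incl Th Th'.
Proof.
  intros [_ Hreal] Hwithin b Hb. destruct (Hreal b Hb) as [v [Hv Hm]].
  destruct (Hwithin v Hv) as [b' [Hb' Hm']]. now rewrite (matches_unique _ _ _ Hm Hm').
Qed.

Lemma succ_types_equiv phi (M : model) Th Th' (z : M) :
  incl Th Th' -> incl Th' Th -> succ_types phi M Th z -> succ_types phi M Th' z.
Proof.
  intros H1 H2 [Hwithin Hreal]. split; auto.
  intros v Hv. destruct (Hwithin v Hv) as [b [? ?]]. eauto.
Qed.

(* The clusters of [z1] and [z2], matched class by class, are bisimilar relative to the
   strict successors, on which the types agree because both realise exactly [Th]. *)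
Lemma type_determined phi (M1 M2 : model) (z1 : M1) (z2 : M2) d Th :
  wK4 M1 -> wK4 M2 ->
  matches d (local_props (props phi) M1 z1) -> matches d (local_props (props phi) M2 z2) ->
  succ_types phi M1 Th z1 -> succ_types phi M2 Th z2 ->
  Forall2 iff (type_of phi M1 z1) (type_of phi M2 z2).
Proof.
  intros HW1 HW2 Hd1 Hd2 [Hin1 Hreal1] [Hin2 Hreal2].
  destruct (same_local_props _ _ _ _ _ _ Hd1 Hd2) as [Hcls Hocc].
  apply sub_agree_Forall2_iff.
  apply (transfer_sub_agree M1 M2 (cluster_match (props phi) M1 M2 z1 z2)
           (sprec M1 z1) (sprec M2 z2) (props phi));
    auto using cluster_relative_bisimulation, incl_refl.
  - split.
    + intros v1 Hv1. destruct (Hin1 v1 Hv1) as [b [Hb Hm1]].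
      destruct (Hreal2 b Hb) as [v2 [Hv2 Hm2]].
      exists v2. split; auto. apply sub_agree_Forall2_iff. eapply matches_Forall2_iff; eauto.
    + intros v2 Hv2. destruct (Hin2 v2 Hv2) as [b [Hb Hm2]].
      destruct (Hreal1 b Hb) as [v1 [Hv1 Hm1]].
      exists v1. split; auto. apply sub_agree_Forall2_iff. eapply matches_Forall2_iff; eauto.
  - intros x c1 c2 _. unfold empty_env. tauto.
  - split; [left | split; [left|]]; auto.
Qed.

Lemma type_function_exists phi : exists tf : list bool -> list (list bool) -> list bool,
  forall (M : model), wK4 M -> forall (z : M) d Th,
    matches d (local_props (props phi) M z) -> succ_types phi M Th z ->
    matches (tf d Th) (type_of phi M z).
Proof.
  assert (H : forall dTh : list bool * list (list bool), exists b,
    forall (M : model), wK4 M -> forall (z : M),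
    matches (fst dTh) (local_props (props phi) M z) -> succ_types phi M (snd dTh) z ->
    matches b (type_of phi M z)).
  { intros [d Th]. simpl.
    destruct (classic (exists (M : model) (z : M), wK4 M /\
                matches d (local_props (props phi) M z) /\ succ_types phi M Th z))
      as [[M0 [z0 (HW0 & Hd0 & HTh0)]] | Hnone].
    - destruct (matches_exists (type_of phi M0 z0)) as [b Hb]. exists b.
      intros M HW z Hd HTh. eapply Forall2_iff_matches; [|exact Hb].
      eapply type_determined; eauto.
    - exists []. intros M HW z Hd HTh. exfalso. apply Hnone. eauto. }
  apply choice in H as [tf Htf].
  exists (fun d Th => tf (d, Th)). intros M HW z d Th. apply (Htf (d, Th)); auto.
Qed.

Definition type_sets (phi : muform) : list (list (list bool)) :=
  sublists (all_bitvecs (fsize phi)).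

Lemma succ_types_exists phi (M : model) (z : M) :
  exists Th, In Th (type_sets phi) /\ succ_types phi M Th z.
Proof.
  destruct (sublists_filter (fun b => exists v, sprec M z v /\ matches b (type_of phi M v))
              (all_bitvecs (fsize phi))) as [Th [HTh Hx]].
  exists Th. split; auto. split.
  - intros v Hv. destruct (matches_exists (type_of phi M v)) as [b Hb].
    exists b. split; auto. apply Hx. split; [eapply type_of_in_all_bitvecs|]; eauto.
  - intros b Hb. apply Hx in Hb. tauto.
Qed.

Lemma upd_env_same {W : Type} (e : nat -> W) i w : upd_env e i w i = w.
Proof. unfold upd_env. now rewrite Nat.eqb_refl. Qed.

Lemma upd_env_other {W : Type} (e : nat -> W) i w j : j <> i -> upd_env e i w j = e j.
Proof. intros H. unfold upd_env. apply Nat.eqb_neq in H. now rewrite H. Qed.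

Definition FFalse : foform := FNot FTrue.

Fixpoint bigor {A : Type} (l : list A) (f : A -> foform) : foform :=
  match l with [] => FFalse | a :: l => FOr (f a) (bigor l f) end.

Fixpoint bigand {A : Type} (l : list A) (f : A -> foform) : foform :=
  match l with [] => FTrue | a :: l => FAnd (f a) (bigand l f) end.

Lemma bigor_sem {A : Type} (M : model) e (l : list A) f :
  fo_sat M e (bigor l f) <-> exists a, In a l /\ fo_sat M e (f a).
Proof.
  induction l as [|a l IH]; simpl; [firstorder|]. rewrite IH. firstorder congruence.
Qed.

Lemma bigand_sem {A : Type} (M : model) e (l : list A) f :
  fo_sat M e (bigand l f) <-> forall a, In a l -> fo_sat M e (f a).
Proof.
  induction l as [|a l IH]; simpl; [firstorder|]. rewrite IH. firstorder congruence.
Qed.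

Fixpoint fo_bits (bits : list bool) (fs : list foform) : foform :=
  match bits, fs with
  | b :: bs, f :: fs => FAnd (if b then f else FNot f) (fo_bits bs fs)
  | [], [] => FTrue
  | _, _ => FFalse
  end.

Definition defines (M : model) (e : nat -> M) (fs : list foform) (L : list Prop) : Prop :=
  Forall2 (fun f Q => fo_sat M e f <-> Q) fs L.

Lemma fo_bits_sem (M : model) e fs L bits :
  defines M e fs L -> (fo_sat M e (fo_bits bits fs) <-> matches bits L).
Proof.
  intros H. revert bits. induction H as [|f Q fs L HQ _ IH]; intros [|b bits]; simpl.
  - split; constructor.
  - split; [tauto | intros Hm; inversion Hm].
  - split; [tauto | intros Hm; inversion Hm].
  - unfold matches. rewrite Forall2_cons_iff, <- IH.
    destruct b; simpl; rewrite HQ; intuition discriminate.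
Qed.

Lemma defines_map {X : Type} (M : model) e (f : X -> foform) (g : X -> Prop) l :
  (forall x, fo_sat M e (f x) <-> g x) -> defines M e (map f l) (map g l).
Proof. intros H. induction l; constructor; auto. Qed.

Definition free_within (vs : list nat) (f : foform) : Prop :=
  forall i, fo_free i f -> In i vs.

Lemma free_within_true vs : free_within vs FTrue.
Proof. now intros i. Qed.

Lemma free_within_false vs : free_within vs FFalse.
Proof. now intros i. Qed.

Lemma free_within_not vs f : free_within vs f -> free_within vs (FNot f).
Proof. auto. Qed.

Lemma free_within_and vs f g : free_within vs f -> free_within vs g -> free_within vs (FAnd f g).
Proof. intros Hf Hg i [Hi | Hi]; auto. Qed.

Lemma free_within_or vs f g : free_within vs f -> free_within vs g -> free_within vs (FOr f g).
Proof. intros Hf Hg i [Hi | Hi]; auto. Qed.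

Lemma free_within_imp vs f g : free_within vs f -> free_within vs g -> free_within vs (FImp f g).
Proof. intros Hf Hg i [Hi | Hi]; auto. Qed.

Lemma free_within_ex vs x f : free_within (x :: vs) f -> free_within vs (FEx x f).
Proof. intros Hf i [Hxi Hi]. destruct (Hf i Hi); [congruence | auto]. Qed.

Lemma free_within_all vs x f : free_within (x :: vs) f -> free_within vs (FAll x f).
Proof. intros Hf i [Hxi Hi]. destruct (Hf i Hi); [congruence | auto]. Qed.

Lemma free_within_rel vs i j : In i vs -> In j vs -> free_within vs (FRel i j).
Proof. intros Hi Hj k [<- | <-]; auto. Qed.

Lemma free_within_eq vs i j : In i vs -> In j vs -> free_within vs (FEq i j).
Proof. intros Hi Hj k [<- | <-]; auto. Qed.

Lemma free_within_pred vs p i : In i vs -> free_within vs (FPred p i).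
Proof. intros Hi k <-. auto. Qed.

Lemma free_within_bigor {A : Type} vs (l : list A) f :
  (forall a, free_within vs (f a)) -> free_within vs (bigor l f).
Proof.
  intros Hf. induction l; simpl; auto using free_within_false, free_within_or.
Qed.

Lemma free_within_bigand {A : Type} vs (l : list A) f :
  (forall a, free_within vs (f a)) -> free_within vs (bigand l f).
Proof.
  intros Hf. induction l; simpl; auto using free_within_true, free_within_and.
Qed.

Lemma free_within_fo_bits vs bits fs :
  Forall (free_within vs) fs -> free_within vs (fo_bits bits fs).
Proof.
  intros Hfs. revert bits. induction Hfs; intros [|[] bits]; simpl;
    auto using free_within_true, free_within_false, free_within_and, free_within_not.
Qed.

#[local] Hint Resolve free_within_true free_within_false free_within_not free_within_and
  free_within_or free_within_imp free_within_ex free_within_all free_within_rel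
  free_within_eq free_within_pred free_within_bigor free_within_bigand
  free_within_fo_bits : free.
#[local] Hint Resolve in_eq in_cons : free.

Ltac simpl_env :=
  repeat (rewrite upd_env_same in * || rewrite upd_env_other in * by lia).

Definition fo_class_props (P : list nat) (y : nat) : list foform :=
  FRel y y :: map (fun p => FPred p y) P.

Definition fo_class P k y : foform := fo_bits k (fo_class_props P y).

Lemma fo_class_sem (M : model) e P k y : fo_sat M e (fo_class P k y) <-> has_class P M k (e y).
Proof. apply fo_bits_sem. constructor; [reflexivity | now apply defines_map]. Qed.

Lemma free_within_fo_class vs P k y : In y vs -> free_within vs (fo_class P k y).
Proof.
  intros Hy. apply free_within_fo_bits. constructor; [auto with free|].
  apply Forall_forall. intros f Hf. apply in_map_iff in Hf as [p [<- _]]. auto with free.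
Qed.

Definition fo_in_cluster (y z : nat) : foform := FOr (FEq y z) (FAnd (FRel y z) (FRel z y)).

Lemma fo_in_cluster_sem (M : model) e y z :
  fo_sat M e (fo_in_cluster y z) <-> in_cluster M (e y) (e z).
Proof. reflexivity. Qed.

(* A formula about the point named [y] binds only [S y] and [S (S y)], so that it can be
   nested under a quantifier over [S y] without capturing anything it refers to. *)
Definition fo_occurs P k y : foform :=
  FEx (S y) (FAnd (fo_in_cluster y (S y)) (fo_class P k (S y))).

Definition fo_occurs_twice P k y : foform :=
  FEx (S y) (FEx (S (S y)) (FAnd (fo_in_cluster y (S y)) (FAnd (fo_in_cluster y (S (S y)))
    (FAnd (FNot (FEq (S y) (S (S y)))) (FAnd (fo_class P k (S y)) (fo_class P k (S (S y)))))))).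

Lemma fo_occurs_sem (M : model) e P k y : fo_sat M e (fo_occurs P k y) <-> occurs P M k (e y).
Proof.
  unfold fo_occurs, occurs. cbn [fo_sat]. setoid_rewrite fo_in_cluster_sem.
  setoid_rewrite fo_class_sem.
  split; intros [v H]; exists v; revert H; simpl_env; auto.
Qed.

Lemma fo_occurs_twice_sem (M : model) e P k y :
  fo_sat M e (fo_occurs_twice P k y) <-> occurs_twice P M k (e y).
Proof.
  unfold fo_occurs_twice, occurs_twice. cbn [fo_sat]. setoid_rewrite fo_in_cluster_sem.
  setoid_rewrite fo_class_sem.
  split; intros [v [v' H]]; exists v, v'; revert H; simpl_env; auto.
Qed.

Definition fo_local_props P y : list foform :=
  fo_class_props P y ++ map (fun k => fo_occurs P k y) (classes P) ++
  map (fun k => fo_occurs_twice P k y) (classes P).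

Definition fo_local P d y : foform := fo_bits d (fo_local_props P y).

Lemma fo_local_sem (M : model) e P d y :
  fo_sat M e (fo_local P d y) <-> matches d (local_props P M (e y)).
Proof.
  apply fo_bits_sem. apply Forall2_app; [|apply Forall2_app].
  - constructor; [reflexivity | now apply defines_map].
  - apply defines_map. intros k. apply fo_occurs_sem.
  - apply defines_map. intros k. apply fo_occurs_twice_sem.
Qed.

Lemma free_within_fo_occurs vs P k y : In y vs -> free_within vs (fo_occurs P k y).
Proof.
  intros Hy. unfold fo_occurs, fo_in_cluster. auto 10 using free_within_fo_class with free.
Qed.

Lemma free_within_fo_occurs_twice vs P k y : In y vs -> free_within vs (fo_occurs_twice P k y).
Proof.
  intros Hy. unfold fo_occurs_twice, fo_in_cluster.
  auto 20 using free_within_fo_class with free.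
Qed.

Lemma free_within_fo_local vs P d y : In y vs -> free_within vs (fo_local P d y).
Proof.
  intros Hy. apply free_within_fo_bits, Forall_forall. unfold fo_local_props, fo_class_props.
  intros f Hf. simpl in Hf. rewrite !in_app_iff, !in_map_iff in Hf.
  destruct Hf as [<- | [[p [<- _]] | [[k [<- _]] | [k [<- _]]]]];
    auto using free_within_fo_occurs, free_within_fo_occurs_twice with free.
Qed.

Definition fo_sprec (y z : nat) : foform := FAnd (FRel y z) (FNot (FRel z y)).

Lemma fo_sprec_sem (M : model) e y z : fo_sat M e (fo_sprec y z) <-> sprec M (e y) (e z).
Proof. reflexivity. Qed.

Definition bitvec_eq_dec : forall a b : list bool, {a = b} + {a <> b} :=
  list_eq_dec Bool.bool_dec.

Section SuccTypesFormula.

Variables (phi : muform) (tf : list bool -> list (list bool) -> list bool).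

Definition local_descriptors : list (list bool) := all_bitvecs (local_size (props phi)).

(* Meant to express "the strict successors of [z] realise exactly the types [Th']", for
   [Th'] within [Th], from a [rec] doing so for candidates strictly within [Th].  When
   [Th'] is all of [Th] there is nothing to recurse on, but then it suffices to say that
   no strictly smaller candidate is the right one. *)
Definition fo_succ_types_as (rec : list (list bool) -> nat -> foform)
  (Th Th' : list (list bool)) (z : nat) : foform :=
  if incl_dec bitvec_eq_dec Th Th' then
    bigand (type_sets phi) (fun Th'' =>
      if incl_dec bitvec_eq_dec Th Th'' then FTrue
      else if incl_dec bitvec_eq_dec Th'' Th then FNot (rec Th'' z) else FTrue)
  else rec Th' z.

Definition fo_type_in rec Th (Ts : list (list bool)) (z : nat) : foform :=
  bigor (type_sets phi) (fun Th' =>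
    if incl_dec bitvec_eq_dec Th' Th then
      bigor local_descriptors (fun d =>
        if in_dec bitvec_eq_dec (tf d Th') Ts
        then FAnd (fo_local (props phi) d z) (fo_succ_types_as rec Th Th' z)
        else FFalse)
    else FFalse).

Definition fo_succ_types_step rec Th (y : nat) : foform :=
  FAnd (FAll (S y) (FImp (fo_sprec y (S y)) (fo_type_in rec Th Th (S y))))
       (bigand Th (fun b => FEx (S y) (FAnd (fo_sprec y (S y)) (fo_type_in rec Th [b] (S y))))).

Fixpoint fo_succ_types (n : nat) (Th : list (list bool)) (y : nat) : foform :=
  match n with
  | 0 => FFalse
  | S n => fo_succ_types_step (fo_succ_types n) Th y
  end.

Section Free.

Variable rec : list (list bool) -> nat -> foform.
Hypothesis Hrec : forall Th z vs, In z vs -> free_within vs (rec Th z).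

Lemma free_within_fo_succ_types_as vs Th Th' z :
  In z vs -> free_within vs (fo_succ_types_as rec Th Th' z).
Proof.
  intros Hz. unfold fo_succ_types_as. destruct (incl_dec _ Th Th'); auto.
  apply free_within_bigand. intros Th''.
  repeat destruct (incl_dec _ _ _); auto with free.
Qed.

Lemma free_within_fo_type_in vs Th Ts z : In z vs -> free_within vs (fo_type_in rec Th Ts z).
Proof.
  intros Hz. apply free_within_bigor. intros Th'. destruct (incl_dec _ Th' Th); auto with free.
  apply free_within_bigor. intros d. destruct (in_dec _ _ _);
    auto using free_within_fo_local, free_within_fo_succ_types_as with free.
Qed.

Lemma free_within_fo_succ_types_step vs Th y :
  In y vs -> free_within vs (fo_succ_types_step rec Th y).
Proof.
  intros Hy. unfold fo_succ_types_step, fo_sprec.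
  apply free_within_and; [|apply free_within_bigand; intros b];
    auto 10 using free_within_fo_type_in with free.
Qed.

End Free.

Lemma free_within_fo_succ_types n Th z vs : In z vs -> free_within vs (fo_succ_types n Th z).
Proof.
  revert Th z vs. induction n; intros Th z vs Hz; simpl;
    auto using free_within_fo_succ_types_step with free.
Qed.

Section Semantics.

Variables (M : model) (HW : wK4 M) (Hpf : path_finite M).
Hypothesis Htf : forall (z : M) d Th, matches d (local_props (props phi) M z) ->
  succ_types phi M Th z -> matches (tf d Th) (type_of phi M z).

Definition defines_smaller (rec : list (list bool) -> nat -> foform) Th : Prop :=
  forall Th'', In Th'' (type_sets phi) -> incl Th'' Th -> ~ incl Th Th'' ->
  forall e z, fo_sat M e (rec Th'' z) <-> succ_types phi M Th'' (e z).

Lemma succ_types_within_sprec Th (z v : M) :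
  succ_types_within phi M Th z -> sprec M z v -> succ_types_within phi M Th v.
Proof. intros Hz Hzv v' Hvv'. apply Hz. eapply sprec_trans; eauto. Qed.

Lemma fo_succ_types_as_sem rec Th Th' e z : defines_smaller rec Th ->
  In Th' (type_sets phi) -> incl Th' Th -> succ_types_within phi M Th (e z) ->
  (fo_sat M e (fo_succ_types_as rec Th Th' z) <-> succ_types phi M Th' (e z)).
Proof.
  intros Hrec HTh' HTh'Th Hwithin. unfold fo_succ_types_as.
  destruct (incl_dec _ Th Th') as [HThTh' | HThTh']; [|apply Hrec; auto].
  rewrite bigand_sem. split.
  - intros Hnone. destruct (succ_types_exists phi M (e z)) as [Tr [HTr HTrz]].
    pose proof (succ_types_incl _ _ _ _ _ HTrz Hwithin) as HTrTh.
    assert (HThTr : incl Th Tr).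
    { specialize (Hnone Tr HTr).
      destruct (incl_dec _ Th Tr) as [|HThTr]; auto.
      destruct (incl_dec _ Tr Th) as [_|]; [|contradiction].
      exfalso. apply Hnone, Hrec; auto. }
    apply (succ_types_equiv _ _ Tr); auto; eapply incl_tran; eauto.
  - intros HTh'z Th'' HTh''.
    destruct (incl_dec _ Th Th'') as [|HThTh'']; [exact I|].
    destruct (incl_dec _ Th'' Th) as [HTh''Th|]; [|exact I].
    intros HTh''z. apply (Hrec Th'' HTh'' HTh''Th HThTh'') in HTh''z.
    apply HThTh''. eapply incl_tran; [exact HThTh'|].
    eapply succ_types_incl; [exact HTh'z | apply HTh''z].
Qed.

Lemma fo_type_in_sem rec Th Ts e z : defines_smaller rec Th ->
  succ_types_within phi M Th (e z) ->
  (fo_sat M e (fo_type_in rec Th Ts z) <-> exists b, In b Ts /\ matches b (type_of phi M (e z))).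
Proof.
  intros Hrec Hwithin. unfold fo_type_in. rewrite bigor_sem. split.
  - intros [Th' [HTh' H]]. destruct (incl_dec _ Th' Th) as [HTh'Th|]; [|now elim H].
    rewrite bigor_sem in H. destruct H as [d [_ H]].
    destruct (in_dec _ (tf d Th') Ts) as [Hin|]; [|now elim H].
    cbn [fo_sat] in H. rewrite fo_local_sem, fo_succ_types_as_sem in H by auto.
    exists (tf d Th'). split; auto. apply Htf; tauto.
  - intros [b [Hb Hm]].
    destruct (succ_types_exists phi M (e z)) as [Tr [HTr HTrz]].
    destruct (matches_exists (local_props (props phi) M (e z))) as [d Hd].
    exists Tr. split; auto.
    destruct (incl_dec _ Tr Th) as [HTrTh|Hn]; [|contradict Hn; eapply succ_types_incl; eauto].
    rewrite bigor_sem. exists d. split.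
    { apply in_all_bitvecs. rewrite (matches_length _ _ Hd). apply length_local_props. }
    destruct (in_dec _ (tf d Tr) Ts) as [|Hn].
    + cbn [fo_sat]. rewrite fo_local_sem, fo_succ_types_as_sem by auto. auto.
    + contradict Hn. now rewrite (matches_unique _ _ _ (Htf _ _ _ Hd HTrz) Hm).
Qed.

(* The "every successor type lies in [Th]" half is proved by induction along the
   converse of [sprec], which is well founded by path-finiteness. *)
Lemma fo_succ_types_step_sem rec Th e y : defines_smaller rec Th ->
  (fo_sat M e (fo_succ_types_step rec Th y) <-> succ_types phi M Th (e y)).
Proof.
  intros Hrec. unfold fo_succ_types_step. cbn [fo_sat]. rewrite bigand_sem.
  assert (Hat : forall v Ts, succ_types_within phi M Th v ->
    fo_sat M (upd_env e (S y) v) (fo_type_in rec Th Ts (S y)) <->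
    exists b, In b Ts /\ matches b (type_of phi M v)).
  { intros v Ts Hv. rewrite fo_type_in_sem; simpl_env; auto. reflexivity. }
  split.
  - intros [Hall Hreal].
    assert (Hwithin : succ_types_within phi M Th (e y)).
    { intros v. induction v as [v IH] using (path_finite_ind M Hpf). intros Hv.
      specialize (Hall v). rewrite fo_sprec_sem in Hall. simpl_env.
      apply Hat; [|now apply Hall].
      intros v' Hv'. apply IH; auto. eapply sprec_trans; eauto. }
    split; auto. intros b Hb. destruct (Hreal b Hb) as [v [Hv Htype]].
    rewrite fo_sprec_sem in Hv. simpl_env.
    apply Hat in Htype as [b' [[<- | []] Hm]]; [eauto|].
    eapply succ_types_within_sprec; eauto.
  - intros [Hwithin Hreal]. split.
    + intros v Hv. rewrite fo_sprec_sem in Hv. simpl_env.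
      apply Hat; [eapply succ_types_within_sprec|]; eauto.
    + intros b Hb. destruct (Hreal b Hb) as [v [Hv Hm]]. exists v. split.
      * rewrite fo_sprec_sem. now simpl_env.
      * apply Hat; [eapply succ_types_within_sprec; eauto|]. exists b. split; auto. now left.
Qed.

Lemma fo_succ_types_sem n Th : length Th < n ->
  forall e y, fo_sat M e (fo_succ_types n Th y) <-> succ_types phi M Th (e y).
Proof.
  revert Th. induction n as [|n IH]; intros Th Hlen e y; [lia|].
  apply fo_succ_types_step_sem. intros Th'' HTh'' Hincl Hnot e' z. apply IH.
  pose proof (strict_incl_length Th'' Th
                (sublists_NoDup _ _ (NoDup_all_bitvecs _) HTh'') Hincl Hnot).
  lia.
Qed.

End Semantics.

End SuccTypesFormula.

Definition true_types (phi : muform) : list (list bool) :=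
  filter (hd false) (all_bitvecs (fsize phi)).

Lemma truth_set_iff_true_type phi (M : model) (w : M) :
  truth_set M phi w <-> exists b, In b (true_types phi) /\ matches b (type_of phi M w).
Proof.
  unfold true_types. split.
  - intros Hw. destruct (matches_exists (type_of phi M w)) as [b Hb].
    exists b. rewrite filter_In. split; auto. split; [eapply type_of_in_all_bitvecs; eauto|].
    now apply (matches_type_of_head phi M w).
  - intros [b [Hb Hm]]. rewrite filter_In in Hb. now apply (matches_type_of_head phi M w b).
Qed.

Definition fo_truth (phi : muform) (tf : list bool -> list (list bool) -> list bool)
  : foform :=
  let all_types := all_bitvecs (fsize phi) in
  fo_type_in phi tf (fo_succ_types phi tf (S (length all_types))) all_types (true_types phi) 0.

Lemma fo_truth_in_one_var phi tf : fo_in_one_var 0 (fo_truth phi tf).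
Proof.
  intros i Hi.
  apply (free_within_fo_type_in phi tf _ (free_within_fo_succ_types phi tf _) [0]) in Hi;
    [|now left].
  now destruct Hi as [<- | []].
Qed.

Lemma fo_truth_sem phi tf (M : model) : wK4 M -> path_finite M ->
  (forall (z : M) d Th, matches d (local_props (props phi) M z) ->
     succ_types phi M Th z -> matches (tf d Th) (type_of phi M z)) ->
  forall w, truth_set M phi w <-> fo_holds_at M (fo_truth phi tf) 0 w.
Proof.
  intros HW Hpf Htf w. unfold fo_holds_at, fo_truth.
  rewrite truth_set_iff_true_type, fo_type_in_sem; auto; [reflexivity | |].
  - intros Th HTh _ _ e z. apply fo_succ_types_sem; auto.
    apply Nat.lt_succ_r, NoDup_incl_length; [eapply sublists_NoDup | apply sublists_incl];
      eauto using NoDup_all_bitvecs.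
  - intros v _. destruct (matches_exists (type_of phi M v)) as [b Hb].
    exists b. split; auto. eapply type_of_in_all_bitvecs; eauto.
Qed.

Theorem mainTheorem3 :
  forall phi : muform, mu_closed phi ->
  exists theta : foform,
    fo_in_one_var 0 theta /\
    bisim_invariant_on pf_wK4 theta 0 /\
    forall M : model, path_finite M -> wK4 M ->
      forall w : M, truth_set M phi w <-> fo_holds_at M theta 0 w.
Proof.
  intros phi _.
  destruct (type_function_exists phi) as [tf Htf].
  exists (fo_truth phi tf). split; [|split].
  - apply fo_truth_in_one_var.
  - intros M N Z [HpM HwM] [HpN HwN] HB u v Huv.
    rewrite <- !fo_truth_sem by auto.
    eapply truth_set_bisim_invariant; eauto.
  - intros M Hpf HW. apply fo_truth_sem; auto.
Qed.
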